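(* Let $n\ge2$, $N=\binom n2$ and $1\le M\le N-1$. Let $H$ be the graph whose vertices are the labeled graphs on $[n]$ with exactly $M$ edges, two graphs being adjacent iff one is obtained from the other by replacing one edge by one non-edge, and let $m_G(G')=\frac{1}{M(N-M)+1}$ if $G'=G$ or $G'$ is adjacent to $G$ in $H$, and $0$ otherwise. Then for all distinct $G_1,G_2\in V(H)$, \[\kappa(G_1,G_2)\ge\frac{N}{M(N-M)+1}.\]
   Context: For a graph $H$ with random walk $m$ (each $m_x$ a probability distribution supported on $x$ and its neighbors), $d$ the graph distance on $H$, the transportation distance is $W(m_1,m_2)=\inf_A\sum_{x,y}A(x,y)d(x,y)$ over couplings $A$ of $m_1,m_2$ (i.e. $\sum_yA(x,y)=m_1(x)$, $\sum_xA(x,y)=m_2(y)$), and the Ollivier Ricci curvature is $\kappa(x,y)=1-W(m_x,m_y)/d(x,y)$. *)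

From mathcomp Require Import all_boot.
From Stdlib Require Import Reals ClassicalEpsilon.

Set Implicit Arguments.
Unset Strict Implicit.
Unset Printing Implicit Defensive.

Definition edge (n : nat) := {e : {set 'I_n} | #|e| == 2}.

Definition Vtx (n M : nat) := {G : {set edge n} | #|G| == M}.

Definition adjHb (n M : nat) (G G' : Vtx n M) : bool :=
  [exists e : edge n, [exists f : edge n,
     [&& e \in val G, f \notin val G & val G' == (val G :\ e) :|: [set f]]]].

Fixpoint reachH (n M : nat) (k : nat) (G G' : Vtx n M) : bool :=
  match k with
  | 0 => G == G'
  | k'.+1 => [exists Z : Vtx n M, reachH k' G Z && adjHb Z G']
  end.

(* Graph distance on H: least k with a walk of length k (a shortest path in a
   graph with #|V| vertices has length < #|V|; value #|V| if unreachable,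
   which never happens since H is connected). *)
Definition distH (n M : nat) (G G' : Vtx n M) : nat :=
  find (fun k => reachH k G G') (iota 0 #|{: Vtx n M}|).

Definition mH (n M : nat) (G G' : Vtx n M) : R :=
  if (G' == G) || adjHb G G'
  then (/ INR (M * ('C(n, 2) - M) + 1))%R else 0%R.

Definition sumR (T : finType) (F : T -> R) : R := \big[Rplus/0%R]_(x : T) F x.

Definition coupling (T : finType) (m1 m2 : T -> R) (A : T -> T -> R) : Prop :=
  (forall x y, (0 <= A x y)%R) /\
  (forall x, sumR (fun y => A x y) = m1 x) /\
  (forall y, sumR (fun x => A x y) = m2 y).

Definition transport_cost (T : finType) (d : T -> T -> nat) (A : T -> T -> R) : R :=
  sumR (fun x => sumR (fun y => (A x y * INR (d x y))%R)).

Definition is_glb (S : R -> Prop) (w : R) : Prop :=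
  (forall c, S c -> (w <= c)%R) /\
  (forall w', (forall c, S c -> (w' <= c)%R) -> (w' <= w)%R).

Definition transW (T : finType) (d : T -> T -> nat) (m1 m2 : T -> R) : R :=
  epsilon (inhabits 0%R)
    (is_glb (fun c => exists A, coupling m1 m2 A /\ c = transport_cost d A)).

Definition kappaH (n M : nat) (G1 G2 : Vtx n M) : R :=
  (1 - transW (@distH n M) (mH G1) (mH G2) / INR (distH G1 G2))%R.

(* Write N = 'C(n, 2) and
   D = M (N - M) + 1, so that the walk m_G is uniform on the ball of G, of size D.

   1. Combinatorics of H: dd X Y = #|X \ Y| is the graph distance of H
      (distH_dd), and every pair at distance j + 1 has a geodesic step.
   2. Adjacent pairs G2 = G1 - a + b: the transposition of the edge slots a, b
      is an automorphism of H exchanging G1 and G2; correcting it on {G1, G2}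
      gives an involution sigma mapping ball(G1) onto ball(G2) whose total
      displacement is (M - 1)(N - M - 1) (sum_dd_sigma).  Coupling m_G1 with
      m_G2 along sigma gives W <= (M - 1)(N - M - 1) / D.
   3. Transport in general: W is below the cost of every coupling, and
      couplings glue with subadditive cost, so along a geodesic
      W(m_X, m_Y) <= d(X, Y) * (M - 1)(N - M - 1) / D.
   4. Since N + (M - 1)(N - M - 1) = D, this gives kappa >= N / D. *)

From Stdlib Require Import Reals ClassicalEpsilon.
From mathcomp Require Import all_boot all_order ssralg ssrnum.
From mathcomp Require Import Rstruct zify ring.

Set Implicit Arguments.
Unset Strict Implicit.
Unset Printing Implicit Defensive.
Import Order.TTheory GRing.Theory Num.Theory.

Section EdgeSwapGraph.
Variables n M : nat.
Local Notation E := (edge n).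
Local Notation V := (Vtx n M).

Definition swapS (S : {set E}) (e f : E) : {set E} := S :\ e :|: [set f].

Lemma card_swapS (S : {set E}) (e f : E) :
  e \in S -> f \notin S -> #|swapS S e f| = #|S|.
Proof.
move=> eS fS; rewrite /swapS setUC cardsU1 !inE negb_and fS orbT /=.
by rewrite [in RHS](cardsD1 e) eS.
Qed.

Lemma swapS_inj (S : {set E}) (e f e' f' : E) :
  e \in S -> f \notin S -> e' \in S -> f' \notin S ->
  swapS S e f = swapS S e' f' -> e = e' /\ f = f'.
Proof.
move=> eS fS e'S f'S h.
have : f \in swapS S e' f' by rewrite -h /swapS !inE eqxx orbT.
rewrite /swapS !inE => /orP[/andP[_ fS']|/eqP ->]; first by rewrite fS' in fS.
split=> //; apply/eqP; apply/negPn/negP => ne.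
have : e \in swapS S e f by rewrite h /swapS !inE ne eS.
by rewrite /swapS !inE eqxx /= => /eqP efe; rewrite -efe eS in fS.
Qed.

(* The swap as a vertex of H (meaningful when e is an edge and f a non-edge). *)
Definition swapV (X : V) (e f : E) : V := insubd X (swapS (val X) e f).

Lemma val_swapV (X : V) (e f : E) : e \in val X -> f \notin val X ->
  val (swapV X e f) = swapS (val X) e f.
Proof.
move=> eX fX; rewrite /swapV insubdK // -topredE /= card_swapS //.
exact: (valP X).
Qed.

Lemma adjP (G G' : V) : reflect (exists e f, [/\ e \in val G, f \notin val G &
   val G' = swapS (val G) e f]) (adjHb G G').
Proof.
apply: (iffP existsP) => [[e /existsP[f /and3P[eG fG /eqP h]]]|[e [f [eG fG h]]]].
  by exists e, f.
by exists e; apply/existsP; exists f; rewrite eG fG h eqxx.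
Qed.

Lemma adj_neq (G X : V) : adjHb G X -> X != G.
Proof.
case/adjP => e [f [eG fG hX]]; apply/negP => /eqP XG.
by move: fG; rewrite -XG hX /swapS !inE eqxx orbT.
Qed.

Lemma adj_sym (X Y : V) : adjHb X Y -> adjHb Y X.
Proof.
case/adjP => e [f [eX fX hY]]; apply/adjP; exists f, e.
have nef : e != f by apply: contraNneq fX => <-.
rewrite hY /swapS !inE !eqxx orbT (negbTE nef) eX /=; split=> //.
apply/setP => x; rewrite !inE.
case: (x =P e) => [->|_] /=; first by rewrite eX orbT.
case: (x =P f) => [->|_] /=; by rewrite ?(negbTE fX) ?orbF.
Qed.

Definition dd (X Y : V) : nat := #|val X :\: val Y|.

(* Both graphs have M edges, so #|X \ Y| = #|Y \ X|. *)
Lemma dd_sym X Y : dd X Y = dd Y X.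
Proof. by rewrite /dd !cardsD setIC (eqP (valP X)) (eqP (valP Y)). Qed.

Lemma dd_tri X Y Z : dd X Z <= dd X Y + dd Y Z.
Proof.
rewrite /dd; apply: leq_trans (leq_card_setU _ _); apply: subset_leq_card.
apply/subsetP => x; rewrite !inE => /andP[nZ iX]; rewrite nZ iX.
by case: (x \in val Y).
Qed.

Lemma dd0 X Y : dd X Y = 0 -> X = Y.
Proof.
rewrite /dd => /eqP; rewrite cards_eq0 setD_eq0 => sub; apply: val_inj; apply/eqP.
by rewrite eqEcard sub (eqP (valP X)) (eqP (valP Y)) leqnn.
Qed.

Lemma ddxx X : dd X X = 0.
Proof. by rewrite /dd setDv cards0. Qed.

Lemma dd_adj Z Y : adjHb Z Y -> dd Z Y <= 1.
Proof.
case/adjP => e [f [eZ fZ hY]]; rewrite /dd hY.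
apply: leq_trans (eq_leq (cards1 e)); apply: subset_leq_card.
apply/subsetP => x; rewrite /swapS !inE; case: (x =P e) => //= _.
by case/andP => /norP[h _] h'; rewrite h' in h.
Qed.

(* Geodesic step: if dd X Y = j+1, exchanging in Y an edge f of X \ Y for
   an edge e of Y \ X gives a neighbour Z of Y with dd X Z = j. *)
Lemma dd_step j X Y : dd X Y = j.+1 -> exists Z, dd X Z = j /\ adjHb Z Y.
Proof.
move=> hd.
have : 0 < dd X Y by rewrite hd.
rewrite /dd card_gt0 => /set0Pn [e]; rewrite inE => /andP[eY eX].
have : 0 < dd Y X by rewrite dd_sym hd.
rewrite /dd card_gt0 => /set0Pn [f]; rewrite inE => /andP[fX fY].
exists (swapV Y f e); have hZ := val_swapV fY eY.
have nef : e != f by apply: contraNneq eY => ->.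
split.
  rewrite /dd hZ.
  have -> : val X :\: swapS (val Y) f e = (val X :\: val Y) :\ e.
    apply/setP => x; rewrite /swapS !inE.
    case: (x =P e) => [->|/eqP ne]; first by rewrite orbT.
    rewrite ?(negbTE ne) ?orbF /=; case: (x =P f) => [->|_] //=.
    by rewrite (negbTE fX) andbF.
  by move: hd; rewrite /dd (cardsD1 e) !inE eY eX => -[].
apply/adjP; exists e, f; rewrite hZ /swapS !inE !eqxx /= (eq_sym f e) (negbTE nef) /=.
rewrite orbT; split=> //; apply/setP => x; rewrite !inE.
case: (x =P f) => [->|_] /=; first by rewrite fY orbT.
by case: (x =P e) => [->|_] /=; rewrite ?(negbTE eY) ?orbF.
Qed.

Lemma dd_between X Y i : i <= dd X Y -> exists Z, dd X Z = i.
Proof.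
have [j hd] : exists j, dd X Y = j by exists (dd X Y).
rewrite hd; elim: j Y hd => [|j IH] Y hd.
  by rewrite leqn0 => /eqP ->; exists Y.
rewrite leq_eqVlt => /orP[/eqP ->|]; first by exists Y.
by rewrite ltnS; have [Z [hZ _]] := dd_step hd; exact: IH hZ.
Qed.

(* dd X takes all the dd X Y + 1 values 0, ..., dd X Y, so H has more than
   dd X Y vertices: the search range of distH is long enough. *)
Lemma dd_lt_card X Y : dd X Y < #|{: V}|.
Proof.
have sub : {subset iota 0 (dd X Y).+1 <= [seq dd X Z | Z <- enum {: V}]}.
  move=> i; rewrite mem_iota add0n ltnS => /andP[_ /dd_between [Z <-]].
  by apply: map_f; rewrite mem_enum.
by have := uniq_leq_size (iota_uniq 0 _) sub; rewrite size_iota size_map -cardE.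
Qed.

Lemma reach_dd j X Y : reachH j X Y -> dd X Y <= j.
Proof.
elim: j Y => [|j IH] Y /=; first by move/eqP=> ->; rewrite ddxx.
case/existsP => Z /andP[/IH h1 /dd_adj h2].
by apply: leq_trans (dd_tri X Z Y) _; rewrite -addn1 leq_add.
Qed.

Lemma dd_reach X Y : reachH (dd X Y) X Y.
Proof.
have [j hd] : exists j, dd X Y = j by exists (dd X Y).
rewrite hd; elim: j Y hd => [|j IH] Y /=.
  by move/dd0 ->.
by case/dd_step => Z [/IH hXZ hZY]; apply/existsP; exists Z; rewrite hXZ.
Qed.

Lemma distH_dd X Y : distH X Y = dd X Y.
Proof.
rewrite /distH; set P := fun k => reachH k X Y.
have ltV := dd_lt_card X Y; have hP : P (dd X Y) := dd_reach X Y.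
apply: anti_leq; apply/andP; split.
  rewrite leqNgt; apply/negP => /(before_find 0).
  by rewrite nth_iota // add0n hP.
have hs : has P (iota 0 #|{: V}|) by apply/hasP; exists (dd X Y); rewrite ?mem_iota.
have := nth_find 0 hs; rewrite has_find in hs.
by rewrite nth_iota ?add0n; [apply: reach_dd | rewrite size_iota in hs].
Qed.

Lemma card_edge : #|{: E}| = 'C(n, 2).
Proof.
rewrite card_sig -[n in 'C(n, 2)]card_ord -card_draws.
by apply: eq_card => x; rewrite !inE.
Qed.

Definition swapP (G : V) (p : E * E) : V := swapV G p.1 p.2.

Lemma swapP_inj (G : V) : {in setX (val G) (~: val G) &, injective (swapP G)}.
Proof.
move=> [e f] [e' f'] /setXP[/= eG] + /setXP[/= e'G] +.
rewrite !inE => fG f'G /(congr1 val); rewrite /swapP !val_swapV //=.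
by case/swapS_inj => // -> ->.
Qed.

Lemma adj_image (G : V) :
  [set X | adjHb G X] = swapP G @: setX (val G) (~: val G).
Proof.
apply/setP => X; rewrite inE; apply/adjP/imsetP.
  case=> e [f [eG fG hX]]; exists (e, f); first by rewrite inE /= eG inE.
  by apply: val_inj; rewrite /swapP val_swapV.
case=> [[e f]] /setXP[/= eG]; rewrite inE => fG ->.
by exists e, f; rewrite /swapP val_swapV.
Qed.

Lemma sum_adj (G : V) (F : V -> nat) :
  \sum_(X | adjHb G X) F X =
  \sum_(e in val G) \sum_(f in ~: val G) F (swapV G e f).
Proof.
rewrite pair_big_dep /= -big_set /= adj_image big_imset; last exact: swapP_inj.
by apply: eq_bigl => -[e f]; rewrite inE.
Qed.

End EdgeSwapGraph.

Lemma sum_neq (T : finType) (A : {set T}) (x0 : T) :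
  \sum_(x in A) (x != x0) = #|A :\ x0|.
Proof.
rewrite -sum1_card [RHS]big_mkcond [LHS]big_mkcond /=.
by apply: eq_bigr => x _; rewrite !inE andbC; case: (x \in A); case: (x != x0).
Qed.

(* The coupling for an adjacent pair G1 ~ G2, G2 = G1 - a + b.  The
   transposition tau of the edge slots a and b induces an automorphism of H
   exchanging G1 and G2; sigma agrees with it except that it fixes G1 and G2. *)
Section Transposition.
Variables n M : nat.
Local Notation E := (edge n).
Local Notation V := (Vtx n M).
Variables (G1 G2 : V) (a b : E).
Hypotheses (aG : a \in val G1) (bG : b \notin val G1)
  (hG2 : val G2 = swapS (val G1) a b).

Lemma nab : a != b.
Proof. by apply: contraNneq bG => <-. Qed.

Definition tau (x : E) : E := if x == a then b else if x == b then a else x.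

Lemma tauK : involutive tau.
Proof.
move=> x; rewrite /tau; case: (x =P a) => [->|xa].
  by rewrite eqxx eq_sym (negbTE nab).
case: (x =P b) => [->|xb]; first by rewrite eqxx.
by move/eqP/negbTE: xa => ->; move/eqP/negbTE: xb => ->.
Qed.

Lemma tau_eq x y : (tau x == y) = (x == tau y).
Proof. by apply/eqP/eqP => [<-|->]; rewrite tauK. Qed.

Definition tauS (S : {set E}) : {set E} := [set x | tau x \in S].

Lemma tauS_swap S e f : tauS (swapS S e f) = swapS (tauS S) (tau e) (tau f).
Proof. by apply/setP => x; rewrite /swapS !inE !tau_eq. Qed.

Definition tauV (X : V) : V := insubd X (tauS (val X)).

Lemma val_tauV X : val (tauV X) = tauS (val X).
Proof.
rewrite /tauV insubdK // -topredE /= (card_preimset _ (can_inj tauK)).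
exact: (valP X).
Qed.

Lemma tauVK : involutive tauV.
Proof. by move=> X; apply: val_inj; rewrite !val_tauV; apply/setP => x; rewrite !inE tauK. Qed.

Lemma tauG1 : tauV G1 = G2.
Proof.
apply: val_inj; rewrite val_tauV hG2; apply/setP => x; rewrite /swapS !inE /tau.
case: (x =P a) => [->|/eqP xa]; first by rewrite (negbTE bG) (negbTE nab).
case: (x =P b) => [->|/eqP xb]; first by rewrite aG ?eqxx ?orbT.
by rewrite orbF.
Qed.

Lemma tauG2 : tauV G2 = G1.
Proof. by rewrite -tauG1 tauVK. Qed.

Lemma adj_tauV X Y : adjHb (tauV X) (tauV Y) = adjHb X Y.
Proof.
suff hom : forall X Y, adjHb X Y -> adjHb (tauV X) (tauV Y).
  by apply/idP/idP => [/hom|/hom //]; rewrite !tauVK.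
move=> {}X {}Y /adjP[e [f [eX fX hY]]]; apply/adjP; exists (tau e), (tau f).
by rewrite !val_tauV !inE !tauK hY tauS_swap.
Qed.

Lemma adj12 : adjHb G1 G2.
Proof. by apply/adjP; exists a, b. Qed.

Definition sigma (X : V) : V := if (X == G1) || (X == G2) then X else tauV X.

Lemma sigmaK : involutive sigma.
Proof.
have tau_ne X G G' : tauV G = G' -> X != G' -> (tauV X == G) = false.
  by move=> hG XG'; apply/negbTE; apply: contra XG' => /eqP hX; rewrite -(tauVK X) hX hG.
move=> X; rewrite {2}/sigma; case: ifP => [h|/norP[h1 h2]]; first by rewrite /sigma h.
by rewrite /sigma (tau_ne _ _ _ tauG1 h2) (tau_ne _ _ _ tauG2 h1) tauVK.
Qed.

Lemma ball_sigma Y : ((sigma Y == G1) || adjHb G1 (sigma Y)) = ((Y == G2) || adjHb G2 Y).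
Proof.
rewrite /sigma; case: (Y =P G1) => [->|/eqP h1] /=.
  by rewrite eqxx (adj_sym adj12) orbT.
case: (Y =P G2) => [->|/eqP h2] /=; first by rewrite adj12 orbT.
have -> : (tauV Y == G1) = false.
  by apply/negbTE; apply: contra h2 => /eqP h; rewrite -(tauVK Y) h tauG1.
by rewrite -[in RHS]adj_tauV tauG2.
Qed.

Lemma dd_sigma e f : e \in val G1 -> f \notin val G1 ->
  dd (swapV G1 e f) (sigma (swapV G1 e f)) = (e != a) * (f != b).
Proof.
move=> eG fG; have hX := val_swapV eG fG.
case: (boolP ((e == a) && (f == b))) => [/andP[/eqP ea /eqP fb]|hne].
  have XG2 : swapV G1 e f = G2 by apply: val_inj; rewrite hX hG2 ea fb.
  by rewrite /sigma XG2 eqxx orbT ddxx ea fb eqxx.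
have XG1 : (swapV G1 e f == G1) = false.
  by apply/negbTE/negP => /eqP h; move: fG; rewrite -{1}h hX /swapS !inE eqxx orbT.
have XG2 : (swapV G1 e f == G2) = false.
  apply/negbTE/negP => /eqP /(congr1 val); rewrite hX hG2 => /swapS_inj.
  by case=> // ea fb; move: hne; rewrite ea fb !eqxx.
have af : a != f by apply: contraNneq fG => <-.
rewrite /sigma XG1 XG2 /= /dd val_tauV hX.
have -> : swapS (val G1) e f :\: tauS (swapS (val G1) e f) =
          [set x | (e != a) && (f != b) && (x == a)].
  apply/setP => x; rewrite /swapS !inE /tau.
  case: (x =P a) => [->|/eqP xa].
    rewrite (negbTE bG) aG (negbTE af) !andbF !andbT !orbF (eq_sym a e) (eq_sym b f).
    by rewrite andbC.
  case: (x =P b) => [->|/eqP xb].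
    rewrite aG (negbTE af) (negbTE bG) /= andbF orbF andbT negbK andbF.
    by move: hne; rewrite (eq_sym e a) (eq_sym f b); case: (a == e); case: (b == f).
  by rewrite andNb andbF.
case: (e != a); case: (f != b) => /=; last 3 first.
- by apply: (etrans _ (cards0 E)); apply: eq_card => x; rewrite !inE.
- by apply: (etrans _ (cards0 E)); apply: eq_card => x; rewrite !inE.
- by apply: (etrans _ (cards0 E)); apply: eq_card => x; rewrite !inE.
by apply: (etrans _ (cards1 a)); apply: eq_card => x; rewrite !inE.
Qed.

(* Total displacement of sigma over the ball of G1: only the neighbours
   G1 - e + f with e != a and f != b move, each by one. *)
Lemma sum_dd_sigma : \sum_(X | (X == G1) || adjHb G1 X) dd X (sigma X) =
   M.-1 * ('C(n, 2) - M).-1.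
Proof.
rewrite (bigD1 G1) /=; last by rewrite eqxx.
have -> : sigma G1 = G1 by rewrite /sigma eqxx.
rewrite ddxx add0n (eq_bigl (fun X => adjHb G1 X)); last first.
  move=> X /=; case h: (adjHb G1 X); first by rewrite orbT (adj_neq h).
  by rewrite orbF andbN.
rewrite sum_adj.
rewrite (eq_bigr (fun e => (e != a) * \sum_(f in ~: val G1) (f != b))); last first.
  move=> e eG; rewrite big_distrr /=; apply: eq_bigr => f fG; apply: dd_sigma => //.
  by rewrite inE in fG.
rewrite -big_distrl /= !sum_neq.
have h1 : #|val G1 :\ a| = M.-1.
  have hc := eqP (valP G1); rewrite (cardsD1 a) aG in hc.
  by move: hc; set k := #|_ :\ a|; lia.
have h2 : #|~: val G1 :\ b| = ('C(n, 2) - M).-1.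
  have hc := cardsC (val G1); rewrite (eqP (valP G1)) card_edge in hc.
  rewrite (cardsD1 b (~: val G1)) inE bG in hc.
  by move: hc; set k := #|_ :\ b|; lia.
by rewrite h1 h2.
Qed.

End Transposition.

Section Transport.
Local Open Scope ring_scope.
Variables (T : finType) (d : T -> T -> nat).

Lemma costE (A : T -> T -> R) :
  transport_cost d A = \sum_x \sum_y A x y * (d x y)%:R.
Proof.
rewrite /transport_cost /sumR; apply: eq_bigr => x _.
by apply: eq_bigr => y _; rewrite INRE.
Qed.

Lemma coupling_ge0 (m1 m2 : T -> R) (A : T -> T -> R) :
  coupling m1 m2 A -> forall x y, 0 <= A x y.
Proof. by case=> A0 _ x y; apply/RleP. Qed.

Lemma cost_ge0 (m1 m2 : T -> R) (A : T -> T -> R) :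
  coupling m1 m2 A -> 0 <= transport_cost d A.
Proof.
move/coupling_ge0 => A0; rewrite costE.
by apply: sumr_ge0 => x _; apply: sumr_ge0 => y _; rewrite mulr_ge0.
Qed.

(* The infimum defining W exists (costs are nonnegative), so W is below the
   cost of every coupling. *)
Lemma transW_le (m1 m2 : T -> R) (A : T -> T -> R) :
  coupling m1 m2 A -> transW d m1 m2 <= transport_cost d A.
Proof.
move=> cA; set S := fun c => exists A, coupling m1 m2 A /\ c = transport_cost d A.
have [w glb_w] : exists w, is_glb S w.
  have hb : bound (fun r => S (- r)).
    exists 0 => r [B [cB hr]]; apply/RleP; rewrite -oppr_ge0 hr.
    exact: cost_ge0 cB.
  have hne : exists r, S (- r) by exists (- transport_cost d A); exists A; rewrite opprK.
  have [m [ub lub]] := completeness _ hb hne.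
  exists (- m); split.
    move=> c Sc; have /RleP : Rle (- c) m by apply: ub; rewrite opprK.
    by move=> h; apply/RleP; rewrite lerNl.
  move=> w' hw'; have /RleP : Rle m (- w').
    by apply: lub => r /hw' /RleP h; apply/RleP; rewrite lerNr.
  by move=> h; apply/RleP; rewrite lerNr.
have [lb _] := epsilon_spec (inhabits 0%R) _ (ex_intro _ w glb_w).
by apply/RleP; apply: lb; exists A.
Qed.

Section GraphCoupling.
Variables (m1 m2 : T -> R) (s : T -> T).
Hypotheses (sK : involutive s) (m1_ge0 : forall x, 0 <= m1 x)
  (m1s : forall y, m1 (s y) = m2 y).

Definition graph_coupling (x y : T) : R := if y == s x then m1 x else 0.

Lemma coupling_graph : coupling m1 m2 graph_coupling.
Proof.
rewrite /graph_coupling; split; [|split] => [x y|x|y].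
- by apply/RleP; case: ifP.
- by rewrite /sumR -big_mkcond (big_pred1 (s x)).
rewrite /sumR (eq_bigr (fun x => if x == s y then m1 x else 0)); last first.
  by move=> x _; congr (if _ then _ else _); apply/eqP/eqP => ->; rewrite sK.
by rewrite -big_mkcond (big_pred1 (s y)).
Qed.

Lemma cost_graph : transport_cost d graph_coupling = \sum_x m1 x * (d x (s x))%:R.
Proof.
rewrite costE; apply: eq_bigr => x _; rewrite (bigD1 (s x)) //= /graph_coupling.
by rewrite eqxx big1 ?addr0 // => y /negbTE ->; rewrite mul0r.
Qed.

End GraphCoupling.

Section Gluing.
Hypothesis d_tri : forall x y z, (d x z <= d x y + d y z)%N.
Variables (m1 m2 m3 : T -> R) (A B : T -> T -> R).
Hypotheses (cA : coupling m1 m2 A) (cB : coupling m2 m3 B).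

Definition glued (x z : T) : R := \sum_y A x y * B y z / m2 y.

Let A0 := coupling_ge0 cA.
Let B0 := coupling_ge0 cB.
Let A1 x : \sum_y A x y = m1 x. Proof. by case: cA => _ [<- _]. Qed.
Let A2 y : \sum_x A x y = m2 y. Proof. by case: cA => _ [_ <-]. Qed.
Let B1 y : \sum_z B y z = m2 y. Proof. by case: cB => _ [<- _]. Qed.
Let B2 z : \sum_y B y z = m3 z. Proof. by case: cB => _ [_ <-]. Qed.

(* Where m2 vanishes so do the entries of A and B, so dividing by m2 is
   harmless. *)
Let A_div y x : A x y / m2 y * m2 y = A x y.
Proof.
have [h|h] := eqVneq (m2 y) 0; last by rewrite mulfVK.
have -> : A x y = 0.
  by apply: (@psumr_eq0P _ _ predT (fun x => A x y)) => //; rewrite A2 h.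
by rewrite !mul0r.
Qed.

Let B_div y z : B y z / m2 y * m2 y = B y z.
Proof.
have [h|h] := eqVneq (m2 y) 0; last by rewrite mulfVK.
have -> : B y z = 0.
  by apply: (@psumr_eq0P _ _ predT (fun z => B y z)) => //; rewrite B1 h.
by rewrite !mul0r.
Qed.

Let term_ge0 x y z : 0 <= A x y * B y z / m2 y.
Proof. by rewrite !mulr_ge0 // invr_ge0 -A2 sumr_ge0. Qed.

Lemma coupling_glued : coupling m1 m3 glued.
Proof.
rewrite /glued; split; [|split] => [x z|x|z].
- by apply/RleP; apply: sumr_ge0 => y _.
- rewrite /sumR exchange_big /= -A1; apply: eq_bigr => y _.
  rewrite (eq_bigr (fun z => (A x y / m2 y) * B y z)); last by move=> z _; ring.
  by rewrite -mulr_sumr B1 A_div.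
rewrite /sumR exchange_big /= -B2; apply: eq_bigr => y _.
rewrite (eq_bigr (fun x => (B y z / m2 y) * A x y)); last by move=> x _; ring.
by rewrite -mulr_sumr A2 B_div.
Qed.

Let leg1 : \sum_x \sum_z \sum_y A x y * B y z / m2 y * (d x y)%:R =
  transport_cost d A.
Proof.
rewrite costE; apply: eq_bigr => x _; rewrite exchange_big; apply: eq_bigr => y _.
rewrite (eq_bigr (fun z => (A x y / m2 y * (d x y)%:R) * B y z)); last first.
  by move=> z _; ring.
by rewrite -mulr_sumr B1 mulrAC A_div.
Qed.

Let leg2 : \sum_x \sum_z \sum_y A x y * B y z / m2 y * (d y z)%:R =
  transport_cost d B.
Proof.
rewrite costE exchange_big /=.
rewrite (eq_bigr (fun z => \sum_y \sum_x A x y * B y z / m2 y * (d y z)%:R)); last first.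
  by move=> z _; rewrite exchange_big.
rewrite exchange_big /=; apply: eq_bigr => y _; apply: eq_bigr => z _.
rewrite (eq_bigr (fun x => (B y z / m2 y * (d y z)%:R) * A x y)); last first.
  by move=> x _; ring.
by rewrite -mulr_sumr A2 mulrAC B_div.
Qed.

Lemma cost_glued :
  transport_cost d glued <= transport_cost d A + transport_cost d B.
Proof.
rewrite -leg1 -leg2 -big_split costE /glued; apply: ler_sum => x _.
rewrite -big_split; apply: ler_sum => z _; rewrite -big_split /= mulr_suml.
apply: ler_sum => y _; rewrite -mulrDr; apply: ler_wpM2l; first exact: term_ge0.
by rewrite -natrD ler_nat.
Qed.

End Gluing.

Section Geodesics.
Hypothesis d_tri : forall x y z, (d x z <= d x y + d y z)%N.
Variables (adj : rel T) (m : T -> T -> R) (c : R).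
Hypotheses (d_eq0 : forall x y, d x y = 0%N -> x = y)
  (geodesic : forall j x y, d x y = j.+1 -> exists z, d x z = j /\ adj z y)
  (adj_coupling : forall x y, adj x y ->
     exists A, coupling (m x) (m y) A /\ transport_cost d A <= c).

Lemma coupling_geodesic j x y : d x y = j.+1 ->
  exists A, coupling (m x) (m y) A /\ transport_cost d A <= j.+1%:R * c.
Proof.
elim: j y => [|j IH] y /geodesic [z [hxz zy]].
  by move: zy; rewrite (d_eq0 hxz) mul1r; exact: adj_coupling.
have [A [cA hA]] := IH _ hxz; have [B [cB hB]] := adj_coupling zy.
exists (glued (m z) A B); split; first exact: coupling_glued.
apply: le_trans (cost_glued d_tri cA cB) _.
by rewrite [j.+2%:R]mulrSr mulrDl mul1r lerD.
Qed.

Lemma transW_geodesic x y : x != y -> transW d (m x) (m y) <= (d x y)%:R * c.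
Proof.
move=> xy; case hd: (d x y) => [|j]; first by rewrite (d_eq0 hd) eqxx in xy.
by have [A [cA hA]] := coupling_geodesic hd; apply: le_trans (transW_le cA) hA.
Qed.

End Geodesics.

End Transport.

Section RandomWalk.
Local Open Scope ring_scope.
Variables n M : nat.
Local Notation V := (Vtx n M).
Local Notation N := 'C(n, 2).

Definition mass : R := (M * (N - M) + 1)%:R^-1.

Lemma mHE (G X : V) : mH G X = if (X == G) || adjHb G X then mass else 0.
Proof. by rewrite /mH INRE. Qed.

Lemma mH_ge0 (G X : V) : 0 <= mH G X.
Proof. by rewrite mHE; case: ifP; rewrite // invr_ge0 ler0n. Qed.

Lemma adjacent_coupling (G1 G2 : V) : adjHb G1 G2 ->
  exists A, coupling (mH G1) (mH G2) A /\
    transport_cost (@distH n M) A <= mass * (M.-1 * (N - M).-1)%:R.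
Proof.
case/adjP => a [b [aG bG hG2]].
have m1s Y : mH G1 (sigma G1 G2 a b Y) = mH G2 Y by rewrite !mHE ball_sigma.
exists (graph_coupling (mH G1) (sigma G1 G2 a b)); split.
  exact: coupling_graph (sigmaK aG bG hG2) (mH_ge0 G1) m1s.
rewrite cost_graph -(sum_dd_sigma aG bG hG2) natr_sum mulr_sumr.
rewrite [X in _ <= X]big_mkcond /=; apply: ler_sum => X _.
by rewrite mHE distH_dd; case: ifP => _; rewrite ?mul0r.
Qed.

(* Along a geodesic of H the adjacent couplings glue together. *)
Lemma transW_bound (G1 G2 : V) : G1 != G2 ->
  transW (@distH n M) (mH G1) (mH G2) <=
  (distH G1 G2)%:R * (mass * (M.-1 * (N - M).-1)%:R).
Proof.
apply: (@transW_geodesic _ _ _ (@adjHb n M)) => [X Y Z|X Y|j X Y|X Y].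
- by rewrite !distH_dd; exact: dd_tri.
- by rewrite distH_dd; exact: dd0.
- by rewrite distH_dd => /dd_step [Z [hZ ZY]]; exists Z; rewrite distH_dd.
- exact: adjacent_coupling.
Qed.

End RandomWalk.

(* N + (M - 1)(N - M - 1) = M (N - M) + 1, written with r = N - M. *)
Lemma ball_size_identity (M r : nat) : (0 < M)%N -> (0 < r)%N ->
  (M + r + M.-1 * r.-1 = M * r + 1)%N.
Proof. by case: M r => [|M] [|r] //= _ _; rewrite mulSn mulnS; lia. Qed.

Lemma curvature_from_transport (W k K N D : R) : (0 < k)%R -> (0 < D)%R ->
  (N + K = D)%R -> (W <= k * (D^-1 * K))%R -> (N / D <= 1 - W / k)%R.
Proof.
move=> k_gt0 D_gt0 hD hW.
have -> : (N / D = 1 - K / D)%R.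
  by rewrite -[N](addrK K) hD mulrBl divff // gt_eqF.
rewrite lerD2l lerN2 ler_pdivrMr //.
by have -> : (K / D * k = k * (D^-1 * K))%R by ring.
Qed.

Theorem mainTheorem6 (n M : nat) (hn : (2 <= n)%N)
  (hM : (1 <= M <= 'C(n, 2) - 1)%N) (G1 G2 : Vtx n M) :
  G1 <> G2 ->
  Rle (Rdiv (INR 'C(n, 2)) (INR (M * ('C(n, 2) - M) + 1))) (kappaH G1 G2).
Proof.
move=> /eqP neq.
have k_gt0 : (0 < distH G1 G2)%N by rewrite distH_dd lt0n; apply: contra neq => /eqP/dd0 ->.
have hNK : ('C(n, 2) + M.-1 * ('C(n, 2) - M).-1 = M * ('C(n, 2) - M) + 1)%N.
  have hMN : (M <= 'C(n, 2))%N by lia.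
  by rewrite -{1}(subnKC hMN) ball_size_identity //; lia.
have hW := transW_bound neq; rewrite /mass in hW.
apply/RleP; rewrite /kappaH RminusE !RdivE !INRE R1E.
apply: (curvature_from_transport _ _ _ hW); rewrite ?ltr0n ?addn1 //.
by rewrite -natrD hNK addn1.
Qed.
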